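(* Let $(X,d)$ be a metric space. Then every isometric embedding $f\colon X\to X$ (a not necessarily surjective distance-preserving map) has the same coarse entropy; that is, $h_\infty(f)=h_\infty(\mathrm{id}_X)$ for every isometric embedding $f\colon X\to X$.
   Context: Let $(X,d)$ be a metric space and $f\colon X\to X$ a map. For $\delta>0$, $n\in\mathbb N$ and $x_0\in X$, a $\delta$-pseudoorbit of $f$ of length $n$ starting at $x_0$ is a sequence $(x_0,x_1,\dots,x_n)$ of points of $X$ with $d(f(x_i),x_{i+1})\le\delta$ for $i=0,\dots,n-1$. Let $P(f,n,\delta,x_0)$ be the set of all such sequences, with the distance between $(x_i)$ and $(y_i)$ given by $\max_{0\le i\le n}d(x_i,y_i)$. A set is $R$-separated if any two distinct elements are at distance at least $R$. Let $s(f,n,R,\delta,x_0)$ be the supremum of cardinalities of $R$-separated subsets of $P(f,n,\delta,x_0)$. The coarse entropy of $f$ is $h_\infty(f)=\lim_{\delta\to\infty}\lim_{R\to\infty}\limsup_{n\to\infty}\frac1n\log s(f,n,R,\delta,x_0)\in[0,\infty]$, which does not depend on $x_0$. *)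

From HB Require Import structures.
From mathcomp Require Import all_boot all_order all_algebra.
From mathcomp Require Import all_classical all_reals all_analysis.
Set Implicit Arguments. Unset Strict Implicit. Unset Printing Implicit Defensive.
Import Order.TTheory GRing.Theory Num.Theory.
Local Open Scope ring_scope.
Local Open Scope classical_set_scope.
Local Open Scope ereal_scope.

Definition is_metric (R : realType) (X : Type) (d : X -> X -> R) : Prop :=
  [/\ forall x y, d x y = 0%R <-> x = y,
      forall x y, d x y = d y x &
      forall x y z, (d x z <= d x y + d y z)%R].

Definition isometric_embedding (R : realType) (X : Type) (d : X -> X -> R)
  (f : X -> X) : Prop := forall x y, d (f x) (f y) = d x y.

(* A sequence (x_0,...,x_n) is a map 'I_n.+1 -> X.
   delta-pseudoorbit of f of length n starting at x0. *)
Definition pseudoorbit (R : realType) (X : Type) (d : X -> X -> R)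
  (f : X -> X) (n : nat) (delta : R) (x0 : X) (x : 'I_n.+1 -> X) : Prop :=
  x ord0 = x0 /\
  forall i : 'I_n, (d (f (x (widen_ord (leqnSn n) i))) (x (lift ord0 i)) <= delta)%R.

Definition seqdist (R : realType) (X : Type) (d : X -> X -> R) (n : nat)
  (x y : 'I_n.+1 -> X) : R :=
  (\big[Num.max/0%R]_(i < n.+1) d (x i) (y i))%R.

(* A subset of cardinality k is given
   by an injective enumeration g : 'I_k -> P(f,n,delta,x0). *)
Definition sep_count (R : realType) (X : Type) (d : X -> X -> R)
  (f : X -> X) (n : nat) (r delta : R) (x0 : X) : \bar R :=
  ereal_sup [set (k%:R)%:E | k in
    [set k : nat | exists g : 'I_k -> ('I_n.+1 -> X),
       injective g /\
       (forall j, pseudoorbit d f delta x0 (g j)) /\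
       (forall j j', j <> j' -> (r <= seqdist d (g j) (g j'))%R)]].

Definition elog (R : realType) (x : \bar R) : \bar R :=
  match x with
  | r%:E => (ln r)%:E
  | +oo => +oo
  | -oo => -oo
  end.

Definition coarse_entropy (R : realType) (X : Type) (d : X -> X -> R)
  (f : X -> X) (x0 : X) : \bar R :=
  lim ((fun delta : R =>
          lim ((fun r : R =>
                  limn_esup (fun n : nat =>
                     ((n%:R)^-1)%:E * elog (sep_count d f n r delta x0)))
               r @[r --> +oo%R]))
       delta @[delta --> +oo%R]).

(* The map (x_i) |-> (f^i x_i) sends delta-pseudo-orbits of the identity to
   delta-pseudo-orbits of f without changing distances.  Conversely, a
   delta-pseudo-orbit (x_0, ..., x_n) of f can be folded into a
   2 delta-pseudo-orbit of the identity of the same length: walk from x_0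
   through f^2 x_0, f^4 x_0, ... up to f^(2m) x_0 (m = n/2), then through
   f^(2(m-j)) x_(2j) for j = 0, ..., m.  Since f is isometric, two folded
   orbits are as far apart as the originals at even times, which costs at
   most 2 delta of separation.  So s(f, n, R, delta) and s(id, n, R', delta')
   bound each other up to shifts of R and delta, which vanish in the limits. *)

From HB Require Import structures.
From mathcomp Require Import all_boot all_order all_algebra.
From mathcomp Require Import all_classical all_reals all_analysis.
From mathcomp Require Import zify lra.
Set Implicit Arguments. Unset Strict Implicit. Unset Printing Implicit Defensive.
Import Order.TTheory GRing.Theory Num.Theory.
Local Open Scope ring_scope.
Local Open Scope classical_set_scope.

Section Metric.
Variables (R : realType) (X : Type) (d : X -> X -> R).
Hypothesis hd : is_metric d.

Lemma metricxx x : d x x = 0.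
Proof. by case: hd => h _ _; apply/(h x x). Qed.

Lemma metricC x y : d x y = d y x.
Proof. by case: hd. Qed.

Lemma metric_triangle x y z : d x z <= d x y + d y z.
Proof. by case: hd. Qed.

Lemma metric_ge0 x y : 0 <= d x y.
Proof.
have := metric_triangle x y x; rewrite metricxx (metricC y x); lra.
Qed.

Variable f : X -> X.
Hypothesis hf : isometric_embedding d f.

Lemma isometric_iter k a b : d (iter k f a) (iter k f b) = d a b.
Proof. by elim: k => //= k IH; rewrite hf IH. Qed.

Lemma dist_iter2 p a : d (iter p f a) (iter p.+2 f a) <= 2 * d a (f a).
Proof.
rewrite iterSr iterSr isometric_iter.
have := metric_triangle a (f a) (f (f a)); rewrite hf; lra.
Qed.

Lemma dist_two_steps a b c : d (f (f a)) c <= d (f a) b + d (f b) c.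
Proof. by rewrite -(hf (f a) b); apply: metric_triangle. Qed.

Lemma dist_next_le a a' b b' (delta : R) :
  d (f a) b <= delta -> d (f a') b' <= delta -> d b b' <= d a a' + 2 * delta.
Proof.
move=> hb hb'; have := metric_triangle b (f a) b'.
have := metric_triangle (f a) (f a') b'; rewrite hf (metricC b (f a)); lra.
Qed.

End Metric.

Section Orbits.
Variables (R : realType) (X : Type) (d : X -> X -> R) (n : nat).

(* For [t > n], [inord t] is [ord0]. *)
Definition orbit_at (x : 'I_n.+1 -> X) (t : nat) : X := x (inord t).

Lemma orbit_at_val x (i : 'I_n.+1) : orbit_at x i = x i.
Proof. by rewrite /orbit_at inord_val. Qed.

Lemma orbit_atE (F : nat -> X) t :
  (t <= n)%N -> orbit_at (fun i : 'I_n.+1 => F i) t = F t.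
Proof. by move=> tn; rewrite /orbit_at inordK. Qed.

Lemma pseudoorbitP f (delta : R) x0 x :
  pseudoorbit d f delta x0 x <->
  orbit_at x 0 = x0 /\
  forall t, (t < n)%N -> d (f (orbit_at x t)) (orbit_at x t.+1) <= delta.
Proof.
have widenE (i : 'I_n) : widen_ord (leqnSn n) i = inord i.
  by apply/val_inj; rewrite /= inordK // ltnS ltnW.
have liftE (i : 'I_n) : lift ord0 i = inord i.+1.
  by apply/val_inj; rewrite /= /bump leq0n add1n inordK ?ltnS.
rewrite /pseudoorbit; split=> [[x0E step]|[x0E step]]; split.
- by rewrite -x0E -(orbit_at_val x ord0).
- by move=> t tn; have := step (Ordinal tn); rewrite widenE liftE.
- by rewrite -x0E -(orbit_at_val x ord0).
- by move=> i; rewrite widenE liftE; apply: step.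
Qed.

Lemma le_seqdist (x y : 'I_n.+1 -> X) i : d (x i) (y i) <= seqdist d x y.
Proof. exact: le_bigmax. Qed.

Lemma orbit_at_le_seqdist (x y : 'I_n.+1 -> X) t :
  d (orbit_at x t) (orbit_at y t) <= seqdist d x y.
Proof. exact: le_seqdist. Qed.

Hypothesis hd : is_metric d.

Lemma seqdistxx (x : 'I_n.+1 -> X) : seqdist d x x = 0.
Proof.
apply/eqP; rewrite eq_le; apply/andP; split.
  by apply: bigmax_le => // i _; rewrite (metricxx hd).
by rewrite -(metricxx hd (x ord0)); apply: le_seqdist.
Qed.

Lemma seqdist_attained (x y : 'I_n.+1 -> X) :
  exists2 t, (t <= n)%N & seqdist d x y <= d (orbit_at x t) (orbit_at y t).
Proof.
have /bigmax_geP[le0|[i _ lei]] := lexx (seqdist d x y).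
  by exists 0%N => //; apply: le_trans le0 (metric_ge0 hd _ _).
by exists i; rewrite ?orbit_at_val // -ltnS.
Qed.

End Orbits.

Definition sep_family (R : realType) (X : Type) (d : X -> X -> R)
  (f : X -> X) (n : nat) (r delta : R) (x0 : X) (k : nat) : Prop :=
  exists g : 'I_k -> ('I_n.+1 -> X),
    injective g /\ (forall j, pseudoorbit d f delta x0 (g j)) /\
    (forall j j', j <> j' -> r <= seqdist d (g j) (g j')).

Section SeparatedFamilies.
Variables (R : realType) (X : Type) (d : X -> X -> R) (x0 : X) (n : nat).

Lemma sep_countE f (r delta : R) :
  sep_count d f n r delta x0 =
  ereal_sup [set k%:R%:E | k in sep_family d f n r delta x0].
Proof. by []. Qed.

Lemma sep_family0 f (r delta : R) : sep_family d f n r delta x0 0.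
Proof. by exists (fun _ _ => x0); split; [case|split; case]. Qed.

Lemma sep_family_le_r f (r1 r2 delta : R) k :
  r1 <= r2 -> sep_family d f n r2 delta x0 k -> sep_family d f n r1 delta x0 k.
Proof.
move=> r12 [g [gi [gp gs]]]; exists g; split=> //; split=> // j j' jj'.
exact: le_trans r12 (gs _ _ jj').
Qed.

Lemma sep_family_le_delta f (r delta1 delta2 : R) k :
  delta1 <= delta2 ->
  sep_family d f n r delta1 x0 k -> sep_family d f n r delta2 x0 k.
Proof.
move=> de12 [g [gi [gp gs]]]; exists g; split=> //; split=> // j.
have [x0E step] := gp j; split=> // i; exact: le_trans (step i) de12.
Qed.

Hypothesis hd : is_metric d.

(* Positive separation makes the transported family injective for free. *)
Lemma sep_family_map (Phi : ('I_n.+1 -> X) -> ('I_n.+1 -> X))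
    f1 f2 (delta1 delta2 r c : R) k :
  c < r ->
  (forall x, pseudoorbit d f1 delta1 x0 x -> pseudoorbit d f2 delta2 x0 (Phi x)) ->
  (forall x y, pseudoorbit d f1 delta1 x0 x -> pseudoorbit d f1 delta1 x0 y ->
     seqdist d x y - c <= seqdist d (Phi x) (Phi y)) ->
  sep_family d f1 n r delta1 x0 k -> sep_family d f2 n (r - c) delta2 x0 k.
Proof.
move=> cr hPhi sepPhi [g [_ [gp gs]]].
have sepg j j' : j <> j' -> r - c <= seqdist d (Phi (g j)) (Phi (g j')).
  by move=> jj'; apply: le_trans (sepPhi _ _ (gp j) (gp j')); rewrite lerD2r gs.
exists (Phi \o g); split; last by split=> // j; apply: hPhi.
move=> j j' gjj'.
case: (pselect (j = j')) => // /sepg; rewrite [Phi (g j)]gjj' seqdistxx // => rc.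
by exfalso; lra.
Qed.

End SeparatedFamilies.

Section Transport.
Variables (R : realType) (X : Type) (d : X -> X -> R).
Hypothesis hd : is_metric d.
Variables (f : X -> X) (x0 : X).
Hypothesis hf : isometric_embedding d f.

Definition iter_orbit {n} (x : 'I_n.+1 -> X) : 'I_n.+1 -> X :=
  fun i => iter i f (x i).

Lemma pseudoorbit_iter_orbit n (delta : R) (x : 'I_n.+1 -> X) :
  pseudoorbit d id delta x0 x -> pseudoorbit d f delta x0 (iter_orbit x).
Proof.
have iterE t : (t <= n)%N -> orbit_at (iter_orbit x) t = iter t f (orbit_at x t).
  by move=> tn; rewrite /orbit_at /iter_orbit inordK.
move=> /pseudoorbitP[x0E step]; apply/pseudoorbitP; split.
  by rewrite iterE.
move=> t tn; have tn' := ltnW tn.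
rewrite !iterE // -(iterS t f) (isometric_iter hf).
exact: step.
Qed.

Lemma seqdist_iter_orbit n (x y : 'I_n.+1 -> X) :
  seqdist d (iter_orbit x) (iter_orbit y) = seqdist d x y.
Proof. by apply: eq_bigr => i _; rewrite (isometric_iter hf). Qed.

Definition fold_path (m : nat) (y : nat -> X) (i : nat) : X :=
  if (i < m)%N then iter (2 * i)%N f x0
  else let j := minn (i - m) m in iter (2 * (m - j))%N f (y (2 * j)%N).

Lemma fold_path_tail m y j :
  (j <= m)%N -> fold_path m y (m + j) = iter (2 * (m - j))%N f (y (2 * j)%N).
Proof.
by move=> jm; rewrite /fold_path ifF ?addKn ?(minn_idPl jm) //; lia.
Qed.

Lemma fold_path0 m y : y 0%N = x0 -> fold_path m y 0 = x0.
Proof. by move=> y0; rewrite /fold_path; case: (posnP m) => [->|]. Qed.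

Lemma fold_path_end m y j :
  (m <= j)%N -> fold_path m y (m + j) = y (2 * m)%N.
Proof.
by move=> mj; rewrite /fold_path ifF ?addKn ?(minn_idPr mj) ?subnn //; lia.
Qed.

Lemma fold_path_step m y (delta : R) :
  y 0%N = x0 -> d x0 (f x0) <= delta ->
  (forall t, (t < 2 * m)%N -> d (f (y t)) (y t.+1) <= delta) ->
  forall i, d (fold_path m y i) (fold_path m y i.+1) <= 2 * delta.
Proof.
move=> y0 x0f step i.
have walk p : d (iter p f x0) (iter p.+2 f x0) <= 2 * delta.
  by apply: le_trans (dist_iter2 hd hf _ _) _; rewrite ler_pM2l.
have [im|mi] := ltnP i.+1 m.
  rewrite /fold_path im ltnW //.
  by rewrite (_ : 2 * i.+1 = (2 * i).+2)%N; [apply: walk|lia].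
have [im|{}mi] := ltnP i m.
  rewrite (_ : i.+1 = m + 0)%N; last by lia.
  rewrite fold_path_tail // /fold_path im subn0 muln0 y0.
  by rewrite (_ : 2 * m = (2 * i).+2)%N; [apply: walk|lia].
have [j ->] : exists j, i = (m + j)%N by exists (i - m)%N; lia.
rewrite -addnS; have [jm|mj] := ltnP j m; last first.
  rewrite !fold_path_end ?(leqW mj) // (metricxx hd).
  by have := metric_ge0 hd x0 (f x0); lra.
rewrite !fold_path_tail ?(ltnW jm) //.
rewrite (_ : 2 * (m - j) = (2 * (m - j.+1)).+2)%N; last by lia.
rewrite !iterSr (isometric_iter hf) (_ : 2 * j.+1 = (2 * j).+2)%N; last by lia.
apply: le_trans (dist_two_steps hd hf _ (y (2 * j).+1)%N _) _.
by rewrite mulr2n mulrDl mul1r lerD // step //; lia.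
Qed.

Definition fold_orbit {n} (x : 'I_n.+1 -> X) : 'I_n.+1 -> X :=
  fun i => fold_path n./2 (orbit_at x) i.

Lemma pseudoorbit_fold_orbit n (delta : R) (x : 'I_n.+1 -> X) :
  d x0 (f x0) <= delta ->
  pseudoorbit d f delta x0 x -> pseudoorbit d id (2 * delta) x0 (fold_orbit x).
Proof.
move=> x0f /pseudoorbitP[x0E step]; apply/pseudoorbitP; split.
  by rewrite orbit_atE // fold_path0.
move=> t tn; rewrite !orbit_atE ?(ltnW tn) //.
by apply: fold_path_step => // s sn; apply: step; lia.
Qed.

Lemma seqdist_fold_orbit n (delta : R) (x y : 'I_n.+1 -> X) :
  0 <= delta -> pseudoorbit d f delta x0 x -> pseudoorbit d f delta x0 y ->
  seqdist d x y - 2 * delta <= seqdist d (fold_orbit x) (fold_orbit y).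
Proof.
move=> de0 /pseudoorbitP[_ stepx] /pseudoorbitP[_ stepy].
have [t tn sep] := seqdist_attained hd x y.
set u := (t %/ 2)%N.
have to_even_time : d (orbit_at x t) (orbit_at y t) <=
    d (orbit_at x (2 * u)%N) (orbit_at y (2 * u)%N) + 2 * delta.
  have [->|tE] : (t = 2 * u)%N \/ (t = (2 * u).+1)%N by rewrite /u; lia.
    by rewrite lerDl mulr_ge0.
  by rewrite tE; apply: (dist_next_le hd hf); [apply: stepx|apply: stepy]; lia.
have um : (u <= n./2)%N by rewrite /u; lia.
have mun : (n./2 + u <= n)%N by lia.
apply: le_trans (orbit_at_le_seqdist _ _ _ (n./2 + u)%N).
rewrite !orbit_atE // !fold_path_tail // (isometric_iter hf) lerBlDr.
by apply: le_trans sep to_even_time.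
Qed.

End Transport.

Section FamilyComparison.
Variables (R : realType) (X : Type) (d : X -> X -> R) (f : X -> X) (x0 : X).
Hypotheses (hd : is_metric d) (hf : isometric_embedding d f).

Lemma sep_family_iter_orbit n (r delta : R) k :
  0 < r -> sep_family d id n r delta x0 k -> sep_family d f n r delta x0 k.
Proof.
move=> r0 fam; rewrite -[r]subr0.
apply: (sep_family_map hd (Phi := iter_orbit f)) fam => //.
- exact: pseudoorbit_iter_orbit.
- by move=> x y _ _; rewrite subr0 seqdist_iter_orbit.
Qed.

Lemma sep_family_fold_orbit n (r delta : R) k :
  d x0 (f x0) <= delta -> 2 * delta < r ->
  sep_family d f n r delta x0 k -> sep_family d id n (r - 2 * delta) (2 * delta) x0 k.
Proof.
move=> x0f r_gt; have de0 := le_trans (metric_ge0 hd x0 (f x0)) x0f.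
apply: (sep_family_map hd (Phi := fold_orbit f x0)) => //.
- by move=> x; apply: pseudoorbit_fold_orbit.
- by move=> x y; apply: seqdist_fold_orbit.
Qed.

End FamilyComparison.

Local Open Scope ereal_scope.

(* [ln] is negative on ]0, 1[ (and [ln 0 = 0]), hence the side conditions. *)
Lemma le_elog (R : realType) (a b : \bar R) :
  a <= b -> a = 0 \/ 1 <= a -> b = 0 \/ 1 <= b -> elog a <= elog b.
Proof.
move=> ab [->|a1] hb.
  rewrite /= ln0 //; case: hb => [->|]; first by rewrite /= ln0.
  case: b {ab} => [s| |] /=; last by rewrite leeNy_eq.
    by rewrite !lee_fin => s1; apply: ln_ge0.
  by move=> _; rewrite leey.
case: hb => [b0|b1]; first by move: (le_trans a1 ab); rewrite b0 lee_fin ler10.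
case: a ab a1 => [s| |]; case: b b1 => [t| |] //=; last by move=> *; rewrite leey.
rewrite !lee_fin => t1 st s1.
by rewrite ler_ln // posrE; lra.
Qed.

Lemma le_limn_esup (R : realType) (u v : (\bar R)^nat) :
  (forall n, u n <= v n) -> limn_esup u <= limn_esup v.
Proof.
move=> uv; apply: le_ereal_inf_tmp => _ [V hV <-].
apply: le_trans (ereal_inf_lbound _) _; first by exists V.
apply: ge_ereal_sup => _ [n hn <-].
by apply: le_trans (uv n) _; apply: ereal_sup_ubound; exists n.
Qed.

Section Growth.
Variables (R : realType) (X : Type) (d : X -> X -> R) (x0 : X).

Lemma sep_count_eq0_or_ge1 f n (r delta : R) :
  sep_count d f n r delta x0 = 0 \/ 1 <= sep_count d f n r delta x0.
Proof.
rewrite sep_countE; set s := ereal_sup _.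
have s_ge0 : 0 <= s by apply: ereal_sup_ubound; exists 0%N => //; apply: sep_family0.
have [->|sn0] := eqVneq s 0; [by left|right].
have /ereal_sup_gt[_ [k hk <-]] : 0 < s by rewrite lt_neqAle eq_sym sn0 s_ge0.
rewrite lte_fin ltr0n => k_gt0; apply: le_trans (ereal_sup_ubound _); last by exists k.
by rewrite lee_fin ler1n.
Qed.

Definition sep_growth f (delta r : R) : \bar R :=
  limn_esup (fun n : nat => ((n%:R)^-1)%:E * elog (sep_count d f n r delta x0)).

Lemma sep_growth_le f1 f2 (delta1 delta2 r1 r2 : R) :
  (forall n k, sep_family d f1 n r1 delta1 x0 k -> sep_family d f2 n r2 delta2 x0 k) ->
  sep_growth f1 delta1 r1 <= sep_growth f2 delta2 r2.
Proof.
move=> fam; apply: le_limn_esup => n; rewrite lee_wpmul2l ?lee_fin ?invr_ge0 //.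
apply: le_elog; try exact: sep_count_eq0_or_ge1.
rewrite !sep_countE; apply: ereal_sup_le => _ [k hk <-].
by exists k => //; apply: fam.
Qed.

Lemma sep_growth_le_r f (delta r1 r2 : R) :
  (r1 <= r2)%R -> sep_growth f delta r2 <= sep_growth f delta r1.
Proof. by move=> r12; apply: sep_growth_le => n k; apply: sep_family_le_r. Qed.

Lemma sep_growth_le_delta f (delta1 delta2 r : R) :
  (delta1 <= delta2)%R -> sep_growth f delta1 r <= sep_growth f delta2 r.
Proof. by move=> de12; apply: sep_growth_le => n k; apply: sep_family_le_delta. Qed.

Lemma coarse_entropyE f :
  coarse_entropy d f x0 =
  ereal_sup (range (fun delta => ereal_inf (range (sep_growth f delta)))).
Proof.
have inner delta :
    lim (sep_growth f delta r @[r --> +oo%R]) = ereal_inf (range (sep_growth f delta)).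
  by apply/cvg_lim => //; apply: nonincreasing_cvge => r1 r2; apply: sep_growth_le_r.
rewrite /coarse_entropy (funext inner); apply/cvg_lim => //.
apply: nondecreasing_cvge => delta1 delta2 de12.
apply: le_ereal_inf_tmp => _ [r _ <-].
apply: le_trans _ (sep_growth_le_delta f r de12).
by apply: ereal_inf_lbound; exists r.
Qed.

(* Shifts of the scale r and of delta disappear in the limits r, delta -> oo. *)
Lemma coarse_entropy_le f1 f2 :
  (forall delta : R, exists delta' c : R, forall n (r : R) k, (c < r)%R ->
     sep_family d f1 n r delta x0 k -> sep_family d f2 n (r - c) delta' x0 k) ->
  coarse_entropy d f1 x0 <= coarse_entropy d f2 x0.
Proof.
move=> cmp; rewrite !coarse_entropyE; apply: ge_ereal_sup => _ [delta _ <-].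
have [delta' [c fam]] := cmp delta.
apply: le_trans (ereal_sup_ubound _) => /=; last by exists delta'.
apply: le_ereal_inf_tmp => _ [r _ <-].
have [max_ge0 max_ger] : (0 <= Num.max r 0 /\ r <= Num.max r 0)%R.
  by rewrite !le_max !lexx orbT.
pose r' := (Num.max r 0 + c + 1)%R.
have cr' : (c < r')%R by rewrite /r'; lra.
apply: le_trans (ereal_inf_lbound _) _; first by exists r'.
apply: le_trans (sep_growth_le (fun n k => fam n r' k cr')) _.
by apply: sep_growth_le_r; rewrite /r'; lra.
Qed.

End Growth.

Theorem mainTheorem1 (R : realType) (X : Type) (d : X -> X -> R)
  (hd : is_metric d) (f : X -> X) (hf : isometric_embedding d f) (x0 : X) :
  coarse_entropy d f x0 = coarse_entropy d id x0.
Proof.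
apply/eqP; rewrite eq_le; apply/andP; split; apply: coarse_entropy_le => delta.
- pose delta1 := Num.max delta (d x0 (f x0)).
  exists (2 * delta1)%R, (2 * delta1)%R => n r k r_gt fam.
  apply: sep_family_fold_orbit => //; first by rewrite le_max lexx orbT.
  by apply: sep_family_le_delta fam; rewrite le_max lexx.
- exists delta, 0%R => n r k r_gt0 fam; rewrite subr0.
  exact: sep_family_iter_orbit.
Qed.
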